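(* Let $\mathbb G=V_1\times V_2$ and $\mathbb G'=V_1'\times V_2'$ be step-two Carnot groups. Then $\mathcal A_h(\mathbb G)=\mathcal A(V_1\times V_2)$ and $\mathcal A_h(\mathbb G')=\mathcal A(V_1'\times V_2')$ if and only if $\mathcal A_h(\mathbb G\times\mathbb G')=\mathcal A((V_1\oplus V_1')\times(V_2\oplus V_2'))$.
   Context: A step-two Carnot group is $\mathbb G=V_1\times V_2$ ($V_1,V_2$ finite-dimensional real vector spaces, $V_2\ne\{0\}$) with a bilinear skew-symmetric $[\cdot,\cdot]:V_1\times V_1\to V_2$ whose image spans $V_2$, and group law $(x,z)\cdot(x',z')=(x+x',z+z'+[x,x'])$. $\mathcal A_h(\mathbb G)$ is the space of maps $f:\mathbb G\to\mathbb R$ such that for all $(x,z)\in\mathbb G$, $y\in V_1$, $t\mapsto f((x,z)\cdot(ty,0))$ is affine; $\mathcal A(W)$ is the space of maps affine in the usual sense on a vector space $W$. The direct product $\mathbb G\times\mathbb G'$ is $(V_1\oplus V_1')\times(V_2\oplus V_2')$ with bracket $[x+x',y+y']:=[x,y]+[x',y']'$ for $x,y\in V_1$, $x',y'\in V_1'$. *)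

From HB Require Import structures.
From mathcomp Require Import all_boot all_order all_algebra.
From mathcomp Require Import reals.
Set Implicit Arguments. Unset Strict Implicit. Unset Printing Implicit Defensive.
Import Order.TTheory GRing.Theory Num.Theory.
Local Open Scope ring_scope.

Section Step2.
Variable R : realType.

(* [br] : V1 x V1 -> V2 makes V1 x V2 a step-two Carnot group. *)
Definition is_step2 (V1 V2 : vectType R) (br : V1 -> V1 -> V2) : Prop :=
  [/\ (forall x (a : R) y1 y2, br x (a *: y1 + y2) = a *: br x y1 + br x y2),
      (forall y (a : R) x1 x2, br (a *: x1 + x2) y = a *: br x1 y + br x2 y),
      (forall x y, br x y = - br y x),
      (forall z : V2, exists (n : nat) (c : 'I_n -> R) (x y : 'I_n -> V1),
          z = \sum_(i < n) c i *: br (x i) (y i)) &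
      (exists z : V2, z <> 0)].

Definition cmul (V1 V2 : vectType R) (br : V1 -> V1 -> V2)
  (p q : V1 * V2) : V1 * V2 :=
  (p.1 + q.1, p.2 + q.2 + br p.1 q.1).

Definition affine1 (g : R -> R) : Prop := exists a b : R, forall t, g t = a * t + b.

Definition horiz_affine (V1 V2 : vectType R) (br : V1 -> V1 -> V2)
  (f : V1 * V2 -> R) : Prop :=
  forall (p : V1 * V2) (y : V1), affine1 (fun t => f (cmul br p (t *: y, 0))).

Definition affine_map (W : lmodType R) (f : W -> R) : Prop :=
  exists (l : W -> R) (c : R),
    (forall (a : R) u v, l (a *: u + v) = a * l u + l v) /\
    (forall w, f w = l w + c).

Definition prod_br (V1 V2 V1' V2' : vectType R)
  (br : V1 -> V1 -> V2) (br' : V1' -> V1' -> V2')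
  (x y : V1 * V1') : V2 * V2' :=
  (br x.1 y.1, br' x.2 y.2).

End Step2.

From HB Require Import structures.
From mathcomp Require Import all_boot all_order all_algebra.
From mathcomp Require Import reals ring lra.
Set Implicit Arguments. Unset Strict Implicit. Unset Printing Implicit Defensive.
Import GRing.Theory.
Local Open Scope ring_scope.

(* A horizontally affine F on G x G' is horizontally affine, hence affine, on
   every slice G x {p'} and {p} x G'; so F(u, u') = B(u, u') + h(u) + h'(u') + c
   with B bilinear. Along the horizontal line through ((x, 0), (x', 0)) in
   direction (y, y'), F is B((y, [x, y]), (y', [x', y'])) t^2 + O(t), so B
   vanishes on pairs of horizontal vectors (y, [x, y]). These span V1 x V2
   because the brackets span V2, hence B = 0 and F is affine. Conversely, a
   horizontally affine f on G lifts to the horizontally affine f o pr on G x G',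
   which is affine, and f is its restriction to a linear copy of V1 x V2. *)

Section Affine.
Variable R : realType.

Section Scalar.
Variables (W : lmodType R) (l : W -> R).
Hypothesis l_scalar : scalar l.

Lemma scalarZ a u : l (a *: u) = a * l u.
Proof. exact: GRing.scalable_linear. Qed.

Lemma scalar0 : l 0 = 0.
Proof. by rewrite -(scale0r 0) scalarZ mul0r. Qed.

Lemma scalarD u v : l (u + v) = l u + l v.
Proof. exact: (GRing.semilinear_linear l_scalar).2. Qed.

Lemma scalarB u v : l (u - v) = l u - l v.
Proof. exact: GRing.zmod_morphism_linear. Qed.

End Scalar.

Lemma affine_mapP (W : lmodType R) (f : W -> R) :
  affine_map f <-> scalar (fun u => f u - f 0).
Proof.
split=> [[l [c [Hl Hf]]] a u v | Hl]; last first.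
  by exists (fun u => f u - f 0), (f 0); split=> // w; rewrite subrK.
by rewrite !Hf (scalar0 Hl) add0r Hl; ring.
Qed.

Lemma affine_map_comp (U W : lmodType R) (f : W -> R) (g : U -> W) (h : U -> R) :
  h =1 f \o g -> linear g -> affine_map f -> affine_map h.
Proof.
move=> hE Hg [l [c [Hl Hf]]]; exists (l \o g), c; split=> [a u v | u] /=.
  by rewrite Hg Hl.
by rewrite hE /= Hf.
Qed.

Lemma horiz_affine_of_affine (V1 V2 : vectType R) (br : V1 -> V1 -> V2)
    (f : V1 * V2 -> R) :
  (forall x t y, br x (t *: y) = t *: br x y) ->
  affine_map f -> horiz_affine br f.
Proof.
move=> brZ [l [c [Hl Hf]]] p y; exists (l (y, br p.1 y)), (l p + c) => t.
have -> : cmul br p (t *: y, 0) = t *: (y, br p.1 y) + p.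
  by rewrite /cmul /= brZ addr0; congr (_, _); rewrite addrC.
by rewrite Hf Hl mulrC addrA.
Qed.

Lemma affine1_quadratic (g : R -> R) a b c :
  (forall t, g t = a * t ^+ 2 + b * t + c) -> affine1 g -> a = 0.
Proof.
move=> Hg [p [q Hpq]].
have := Hpq 1; have := Hpq (-1); have := Hpq 0; rewrite !Hg.
by rewrite !expr2; lra.
Qed.

Section SeparatelyAffine.
Variables (W W' : lmodType R) (G : W -> W' -> R).
Hypotheses (G_affine_l : forall u', affine_map (G ^~ u'))
           (G_affine_r : forall u, affine_map (G u)).

Definition affine_defect u u' := G u u' - G u 0 - G 0 u' + G 0 0.

Lemma affine_defect_scalar_l u' : scalar (affine_defect ^~ u').
Proof.
move=> a u v; rewrite /affine_defect.
have /affine_mapP Hu' := G_affine_l u'; have /affine_mapP H0 := G_affine_l 0.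
rewrite -[G _ u'](subrK (G 0 u')) Hu' -[G _ 0](subrK (G 0 0)) H0 /=; ring.
Qed.

Lemma affine_defect_scalar_r u : scalar (affine_defect u).
Proof.
move=> a u' v'; rewrite /affine_defect.
have /affine_mapP Hu := G_affine_r u; have /affine_mapP H0 := G_affine_r 0.
rewrite -[G u _](subrK (G u 0)) Hu -[G 0 _](subrK (G 0 0)) H0 /=; ring.
Qed.

Lemma affine_defect_split u u' :
  G u u' = affine_defect u u' + (G u 0 - G 0 0) + (G 0 u' - G 0 0) + G 0 0.
Proof. rewrite /affine_defect; ring. Qed.

(* Along a line, [G] is affine plus [t ^+ 2] times the defect of the directions. *)
Lemma affine_defect_eq0_of_line v v' u u' :
  affine1 (fun t => G (t *: v + u) (t *: v' + u')) -> affine_defect v v' = 0.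
Proof.
have /affine_mapP Hl := G_affine_l 0; have /affine_mapP Hr := G_affine_r 0.
apply: (affine1_quadratic (b := affine_defect v u' + affine_defect u v'
                                 + (G v 0 - G 0 0) + (G 0 v' - G 0 0))
                          (c := G u u')) => t.
rewrite [LHS]affine_defect_split [G u u']affine_defect_split.
rewrite affine_defect_scalar_l !affine_defect_scalar_r Hl Hr /=; ring.
Qed.

Lemma affine_of_defect_eq0 :
  (forall u u', affine_defect u u' = 0) -> affine_map (fun p : W * W' => G p.1 p.2).
Proof.
move=> D0; have /affine_mapP Hl := G_affine_l 0; have /affine_mapP Hr := G_affine_r 0.
apply/affine_mapP => a [u u'] [v v'] /=.
rewrite [G (_ + _) _]affine_defect_split [G u u']affine_defect_split.
rewrite [G v v']affine_defect_split !D0 Hl Hr /=; ring.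
Qed.

End SeparatelyAffine.

Section StepTwo.
Variables (V1 V2 : vectType R) (br : V1 -> V1 -> V2).
Hypothesis hG : is_step2 br.

Lemma step2_br0 x : br x 0 = 0.
Proof. by case: hG => brD _ _ _ _; rewrite -(addNr x) -scaleN1r brD scaleN1r addNr. Qed.

Lemma step2_brZ x t y : br x (t *: y) = t *: br x y.
Proof. by case: hG => brD _ _ _ _; rewrite -[t *: y]addr0 brD step2_br0 addr0. Qed.

Lemma step2_br0l y : br 0 y = 0.
Proof. by case: hG => _ _ brN _ _; rewrite brN step2_br0 oppr0. Qed.

Lemma step2_scalar_eq0 (l : V2 -> R) :
  scalar l -> (forall x y, l (br x y) = 0) -> forall z, l z = 0.
Proof.
move=> Hl l_br z; case: hG => _ _ _ /(_ z)[n [c [x [y ->]]]] _.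
rewrite (big_morph l (scalarD Hl) (scalar0 Hl)).
by apply: big1 => i _; rewrite scalarZ // l_br mulr0.
Qed.

Lemma step2_horiz_scalar_eq0 (l : V1 * V2 -> R) :
  scalar l -> (forall x y, l (y, br x y) = 0) -> forall p, l p = 0.
Proof.
move=> Hl l_horiz.
have l_V1 y : l (y, 0) = 0 by rewrite -(step2_br0l y) l_horiz.
have l_V2 : forall z, l (0, z) = 0.
  apply: step2_scalar_eq0 => [a u v|x y].
    by rewrite -Hl; congr l; apply: injective_projections; rewrite /= ?scaler0 ?addr0.
  have -> : (0, br x y) = (y, br x y) - (y, 0).
    by apply: injective_projections; rewrite /= ?subrr ?subr0.
  by rewrite scalarB // l_horiz l_V1 subrr.
case=> y z; have -> : (y, z) = (y, 0) + (0, z).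
  by apply: injective_projections; rewrite /= ?addr0 ?add0r.
by rewrite scalarD // l_V1 l_V2 addr0.
Qed.

Lemma step2_cmul0 p : cmul br p (0, 0) = p.
Proof. by case: p => x z; rewrite /cmul /= step2_br0 !addr0. Qed.

Lemma step2_cmul_horiz x y t : cmul br (x, 0) (t *: y, 0) = t *: (y, br x y) + (x, 0).
Proof.
by apply: injective_projections; rewrite /= ?step2_brZ ?add0r ?addr0 // addrC.
Qed.

End StepTwo.

Section Product.
Variables (V1 V2 V1' V2' : vectType R).
Variables (br : V1 -> V1 -> V2) (br' : V1' -> V1' -> V2').
Hypotheses (hG : is_step2 br) (hG' : is_step2 br').

Definition prod_pair (u : V1 * V2) (u' : V1' * V2') : (V1 * V1') * (V2 * V2') :=
  ((u.1, u'.1), (u.2, u'.2)).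

Lemma prod_pair_linear_l : linear (prod_pair ^~ 0).
Proof.
move=> a u v; apply: injective_projections; apply: injective_projections;
  by rewrite /= ?scaler0 ?addr0.
Qed.

Lemma prod_pair_linear_r : linear (prod_pair 0).
Proof.
move=> a u v; apply: injective_projections; apply: injective_projections;
  by rewrite /= ?scaler0 ?addr0.
Qed.

Lemma prod_brZ x t y : prod_br br br' x (t *: y) = t *: prod_br br br' x y.
Proof. by rewrite /prod_br /= !step2_brZ. Qed.

Lemma horiz_affine_prod_line F p p' y y' :
  horiz_affine (prod_br br br') F ->
  affine1 (fun t => F (prod_pair (cmul br p (t *: y, 0)) (cmul br' p' (t *: y', 0)))).
Proof. by move=> HF; exact: HF (prod_pair p p') (y, y'). Qed.

Lemma horiz_affine_prod_l F u' :
  horiz_affine (prod_br br br') F -> horiz_affine br (fun u => F (prod_pair u u')).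
Proof.
move=> HF p y; have [a [b Hab]] := horiz_affine_prod_line p u' y 0 HF.
by exists a, b => t; rewrite -Hab scaler0 step2_cmul0.
Qed.

Lemma horiz_affine_prod_r F u :
  horiz_affine (prod_br br br') F -> horiz_affine br' (fun u' => F (prod_pair u u')).
Proof.
move=> HF p y; have [a [b Hab]] := horiz_affine_prod_line u p 0 y HF.
by exists a, b => t; rewrite -Hab scaler0 step2_cmul0.
Qed.

Lemma prod_affine_of_factors :
  (forall f, horiz_affine br f -> affine_map f) ->
  (forall f, horiz_affine br' f -> affine_map f) ->
  forall F, horiz_affine (prod_br br br') F -> affine_map F.
Proof.
move=> HG HG' F HF; pose G u u' := F (prod_pair u u').
have G_affine_l u' : affine_map (G ^~ u') by apply/HG/horiz_affine_prod_l.
have G_affine_r u : affine_map (G u) by apply/HG'/horiz_affine_prod_r.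
have D_horiz x y x' y' : affine_defect G (y, br x y) (y', br' x' y') = 0.
  apply: (affine_defect_eq0_of_line G_affine_l G_affine_r (u := (x, 0)) (u' := (x', 0))).
  have [a [b Hab]] := horiz_affine_prod_line (x, 0) (x', 0) y y' HF.
  by exists a, b => t; rewrite -Hab !step2_cmul_horiz.
have D0 u u' : affine_defect G u u' = 0.
  move: u'; apply: (step2_horiz_scalar_eq0 hG') => [|x' y'].
    exact: affine_defect_scalar_r.
  move: u; apply: (step2_horiz_scalar_eq0 hG) => [|x y]; last exact: D_horiz.
  exact: affine_defect_scalar_l.
apply: (affine_map_comp (g := fun P => ((P.1.1, P.2.1), (P.1.2, P.2.2))) _ _
          (affine_of_defect_eq0 G_affine_l G_affine_r D0)) => [|//].
by case=> -[x x'] [z z'].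
Qed.

Lemma factor_affine_of_prod_l :
  (forall F, horiz_affine (prod_br br br') F -> affine_map F) ->
  forall f, horiz_affine br f -> affine_map f.
Proof.
move=> HP f Hf.
have HF : affine_map (fun P : (V1 * V1') * (V2 * V2') => f (P.1.1, P.2.1)).
  by apply: HP => P y; exact: Hf (P.1.1, P.2.1) y.1.
by apply: (affine_map_comp _ prod_pair_linear_l HF); case.
Qed.

Lemma factor_affine_of_prod_r :
  (forall F, horiz_affine (prod_br br br') F -> affine_map F) ->
  forall f, horiz_affine br' f -> affine_map f.
Proof.
move=> HP f Hf.
have HF : affine_map (fun P : (V1 * V1') * (V2 * V2') => f (P.1.2, P.2.2)).
  by apply: HP => P y; exact: Hf (P.1.2, P.2.2) y.2.
by apply: (affine_map_comp _ prod_pair_linear_r HF); case.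
Qed.

End Product.
End Affine.

Theorem proposition6p4 (R : realType) (V1 V2 V1' V2' : vectType R)
  (br : V1 -> V1 -> V2) (br' : V1' -> V1' -> V2')
  (hG : is_step2 br) (hG' : is_step2 br') :
  ((forall f : V1 * V2 -> R, horiz_affine br f <-> affine_map f) /\
   (forall f : V1' * V2' -> R, horiz_affine br' f <-> affine_map f))
  <->
  (forall f : (V1 * V1') * (V2 * V2') -> R,
      horiz_affine (prod_br br br') f <-> affine_map f).
Proof.
split=> [[HG HG'] F|HP].
  split=> [HF|]; last exact: horiz_affine_of_affine (prod_brZ hG hG').
  exact (prod_affine_of_factors hG hG' (fun f => (HG f).1) (fun f => (HG' f).1) HF).
have HP_affine F := (HP F).1.
split=> f; split=> Hf.
- exact (factor_affine_of_prod_l HP_affine Hf).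
- exact (horiz_affine_of_affine (step2_brZ hG) Hf).
- exact (factor_affine_of_prod_r HP_affine Hf).
- exact (horiz_affine_of_affine (step2_brZ hG') Hf).
Qed.
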